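(* Let $|\Psi\rangle$ be a pure state and $\sigma$ a density operator on a finite-dimensional Hilbert space, $H$ Hermitian, and $0<\epsilon$ with $\||\Psi\rangle\langle\Psi|-\sigma\|_1\le\epsilon$. Then the eigenvector $|\Phi\rangle$ of $\sigma$ with the largest eigenvalue satisfies $|\langle\Psi|\Phi\rangle|^2\ge1-\epsilon$ and $$P_H(\sigma)\ge V_H(\Phi)\,(2\epsilon^{-1}-3).$$
   Context: $V_H(\Phi)=\langle\Phi|H^2|\Phi\rangle-\langle\Phi|H|\Phi\rangle^2$. Purity of coherence: $P_H(\sigma)=\mathrm{Tr}(H\sigma^2H\sigma^{-1})-\mathrm{Tr}(\sigma H^2)$ ($\sigma^{-1}$ inverse on the support) if $\mathrm{supp}(H\sigma H)\subseteq\mathrm{supp}(\sigma)$, else $\infty$. *)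

(* Complex scalars: an arbitrary numClosedFieldType C
   (algebraically closed field with conjugation, e.g. algC; the statement is
   first-order over C so this is the standard generic rendering). *)
From HB Require Import structures.
From mathcomp Require Import all_boot all_order all_algebra.
Set Implicit Arguments. Unset Strict Implicit. Unset Printing Implicit Defensive.
Import Order.TTheory GRing.Theory Num.Theory Num.Def.
Local Open Scope ring_scope.

Section Quantum.
Variable C : numClosedFieldType.

Definition adj m n (M : 'M[C]_(m, n)) : 'M[C]_(n, m) := map_mx conjC (M^T).

Definition herm n (A : 'M[C]_n) : Prop := A \is hermsymmx.

Definition psd n (A : 'M[C]_n) : Prop :=
  herm A /\ forall v : 'cV[C]_n, 0 <= (adj v *m A *m v) 0 0.

Definition density n (sigma : 'M[C]_n) : Prop := psd sigma /\ \tr sigma = 1.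

Definition unit_vec n (psi : 'cV[C]_n) : Prop := (adj psi *m psi) 0 0 = 1.

Definition proj n (psi : 'cV[C]_n) : 'M[C]_n := psi *m adj psi.

Definition braket n (u v : 'cV[C]_n) : C := (adj u *m v) 0 0.

(* trace norm of a normal (in particular Hermitian) matrix: sum of the
   absolute values of its eigenvalues (spectral decomposition
   A = P^dagger diag(d) P, P unitary). *)
Definition trnorm n (A : 'M[C]_n) : C :=
  \sum_(i < n) `|spectral_diag A 0 i|.

(* Inverse on the support of a Hermitian sigma = P^dagger diag(d) P:
   P^dagger diag(d_i^{-1} if d_i <> 0, 0 otherwise) P (0^-1 = 0 in MathComp). *)
Definition supp_inv n (sigma : 'M[C]_n) : 'M[C]_n :=
  invmx (spectralmx sigma) *m diag_mx (map_mx GRing.inv (spectral_diag sigma))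
    *m spectralmx sigma.

(* supp(A) \subseteq supp(B): inclusion of column spaces (ranges) *)
Definition supp_sub n (A B : 'M[C]_n) : bool := ((A^T) <= (B^T))%MS.

Definition variance n (H : 'M[C]_n) (phi : 'cV[C]_n) : C :=
  braket phi (H *m H *m phi) - (braket phi (H *m phi)) ^+ 2.

(* purity of coherence P_H(sigma); None encodes +infinity *)
Definition purity_coh n (H sigma : 'M[C]_n) : option C :=
  if supp_sub (H *m sigma *m H) sigma then
    Some (\tr (H *m (sigma *m sigma) *m H *m supp_inv sigma)
          - \tr (sigma *m (H *m H)))
  else None.

Definition ext_ge (x : option C) (r : C) : Prop :=
  if x is Some p then r <= p else True.

End Quantum.

From HB Require Import structures.
From mathcomp Require Import all_boot all_order all_algebra.
From mathcomp Require Import ring.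
Import Order.TTheory GRing.Theory Num.Theory.
Set Implicit Arguments.
Unset Strict Implicit.
Unset Printing Implicit Defensive.
Local Open Scope ring_scope.

(* Both claims rest on the trace-norm bound
     (tr A - |A|_1) / 2 <= <x|A|x> <= (tr A + |A|_1) / 2
   for Hermitian A and unit x, applied to the traceless A = |Psi><Psi| - sigma:
   at x = Psi it gives lambda_max >= <Psi|sigma|Psi> >= 1 - eps/2, and at
   x = Phi it gives |<Psi|Phi>|^2 >= lambda_max - eps/2.
   In the eigenbasis sigma = sum_i d_i |i><i|, with w_ij = |<i|H|j>|^2,
     P_H(sigma) = 1/2 sum_ij w_ij (d_i - d_j)^2 (d_i + d_j) / (d_i d_j),
   a sum of nonnegative terms, so for eps >= 2/3 there is nothing to prove.
   Otherwise lambda_max = d_k > 1/2 is a simple eigenvalue, so Phi = |k> up to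
   phase and V_H(Phi) = sum_{j <> k} w_kj; keeping only the terms with i = k,
   each one is at least w_kj (2/eps - 3) because d_j <= 1 - d_k <= eps/2. *)

Section Adjoint.
Variable C : numClosedFieldType.

Lemma adjM m n p (A : 'M[C]_(m, n)) (B : 'M[C]_(n, p)) :
  adj (A *m B) = adj B *m adj A.
Proof. by rewrite /adj trmx_mul map_mxM. Qed.

Lemma adjK m n (A : 'M[C]_(m, n)) : adj (adj A) = A.
Proof. exact: trmxCK. Qed.

Lemma adjB m n (A B : 'M[C]_(m, n)) : adj (A - B) = adj A - adj B.
Proof. by apply/matrixP => i j; rewrite !mxE rmorphB. Qed.

Lemma adjZ m n (c : C) (A : 'M[C]_(m, n)) : adj (c *: A) = c^* *: adj A.
Proof. by apply/matrixP => i j; rewrite !mxE rmorphM. Qed.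

Lemma hermE n (A : 'M[C]_n) : herm A <-> adj A = A.
Proof.
by split=> [/is_hermitianmxP {2}-> | hA]; [|apply/is_hermitianmxP];
  rewrite expr0 scale1r.
Qed.

Lemma mulmx11E (X Y : 'M[C]_1) : (X *m Y) 0 0 = X 0 0 * Y 0 0.
Proof. by rewrite mxE big_ord1. Qed.

Lemma adj_mulmx_col n (y : 'cV[C]_n) :
  (adj y *m y) 0 0 = \sum_k `|y k 0| ^+ 2.
Proof. by rewrite mxE; apply: eq_bigr => k _; rewrite !mxE normCKC. Qed.

Lemma adj_diag_mulmx_col n (e : 'rV[C]_n) (y : 'cV[C]_n) :
  (adj y *m diag_mx e *m y) 0 0 = \sum_k e 0 k * `|y k 0| ^+ 2.
Proof.
rewrite mxE; apply: eq_bigr => k _.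
by rewrite mul_mx_diag !mxE normCKC mulrCA mulrA.
Qed.

Lemma quad_single_coord n (f : 'cV[C]_n) (M : 'M[C]_n) k :
  (forall j, j != k -> f j 0 = 0) -> `|f k 0| ^+ 2 = 1 ->
  (adj f *m M *m f) 0 0 = M k k.
Proof.
move=> f_supp f_norm; have adj_f j : adj f 0 j = (f j 0)^* by rewrite !mxE.
rewrite mxE (bigD1 k) //= big1 ?addr0 => [|j /f_supp->]; last by rewrite mulr0.
rewrite mxE (bigD1 k) //= big1 ?addr0 => [|j /f_supp fj0]; last first.
  by rewrite adj_f fj0 conjC0 mul0r.
by rewrite adj_f mulrAC -normCKC f_norm mul1r.
Qed.

End Adjoint.

Section UnitaryConjugation.
Variables (C : numClosedFieldType) (n : nat) (U : 'M[C]_n).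
Hypothesis U_unitary : U \is unitarymx.

Let U_unit : U \in unitmx. Proof. exact: unitarymx_unit. Qed.

Lemma conjmx_unitaryM A B : conjmx U (A *m B) = conjmx U A *m conjmx U B.
Proof. by rewrite conjmxM ?inE ?stablemx_unit. Qed.

Lemma mxtrace_conjmx_unitary A : \tr (conjmx U A) = \tr A.
Proof. by rewrite conjumx // mxtrace_mulC mulmxA mulVmx ?mul1mx. Qed.

Lemma adj_conjmx_unitary A : adj (conjmx U A) = conjmx U (adj A).
Proof. by rewrite !conjymx // !adjM adjK mulmxA. Qed.

Lemma conjmx_unitary_herm A i j :
  herm A -> conjmx U A j i = (conjmx U A i j)^*.
Proof. by move=> /hermE A_adj; rewrite -{1}A_adj -adj_conjmx_unitary !mxE. Qed.

Lemma quad_conjmx_unitary (x : 'cV[C]_n) A :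
  adj x *m A *m x = adj (U *m x) *m conjmx U A *m (U *m x).
Proof. by rewrite conjymx // adjM !mulmxA !mulmxKtV. Qed.

Lemma adj_mulmx_unitary (x : 'cV[C]_n) :
  adj (U *m x) *m (U *m x) = adj x *m x.
Proof. by rewrite adjM mulmxA mulmxKtV. Qed.

End UnitaryConjugation.

Section Spectral.
Variables (C : numClosedFieldType) (n : nat) (A : 'M[C]_n).
Local Notation U := (spectralmx A).
Local Notation e := (spectral_diag A).
Local Notation eigvec k := (adj U *m (delta_mx k 0 : 'cV[C]_n)).

Let U_unitary : U \is unitarymx. Proof. exact: spectral_unitarymx. Qed.

Lemma conjmx_spectral : A \is normalmx -> conjmx U A = diag_mx e.
Proof.
move=> /orthomx_spectralP {2}->.
by rewrite -conjVmx ?spectral_unit // conjmxVK ?spectral_unit.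
Qed.

Lemma unit_vec_spectral_weights x :
  unit_vec x -> \sum_k `|(U *m x) k 0| ^+ 2 = 1.
Proof. by rewrite /unit_vec -adj_mulmx_col (adj_mulmx_unitary U_unitary). Qed.

Lemma spectral_eigenvector_unit k : unit_vec (eigvec k).
Proof.
rewrite /unit_vec -(adj_mulmx_unitary U_unitary) !(mulmxA U).
rewrite (unitarymxP U_unitary) mul1mx adj_mulmx_col.
rewrite (bigD1 k) //= big1 ?addr0 => [|j /negbTE kj]; rewrite !mxE ?eqxx ?kj.
  by rewrite normr1 expr1n.
by rewrite normr0 expr0n.
Qed.

Lemma spectral_eigenvector_neq0 k : eigvec k != 0.
Proof.
apply/eqP => /(congr1 (mulmx U)).
rewrite mulmxA (unitarymxP U_unitary) mul1mx mulmx0.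
by move/matrixP/(_ k 0); rewrite !mxE !eqxx => /eqP; rewrite oner_eq0.
Qed.

Hypothesis A_normal : A \is normalmx.

Lemma mxtrace_spectral : \tr A = \sum_k e 0 k.
Proof.
by rewrite -(mxtrace_conjmx_unitary U_unitary) conjmx_spectral ?mxtrace_diag.
Qed.

Lemma quad_spectral (x : 'cV[C]_n) :
  (adj x *m A *m x) 0 0 = \sum_k e 0 k * `|(U *m x) k 0| ^+ 2.
Proof.
rewrite (quad_conjmx_unitary U_unitary) conjmx_spectral //.
exact: adj_diag_mulmx_col.
Qed.

Lemma spectral_eigenvector k : A *m eigvec k = e 0 k *: eigvec k.
Proof.
have diag_delta : diag_mx e *m delta_mx k 0 = e 0 k *: (delta_mx k 0 : 'cV_n).
  apply/matrixP => i j; rewrite mul_diag_mx !mxE.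
  by case: eqVneq => [->|] /=; rewrite ?mulr0 ?mulr1.
move/orthomx_spectralP: A_normal => {1}->.
rewrite invmx_unitary // !mulmxA mulmxtVK //.
by rewrite -mulmxA diag_delta scalemxAr.
Qed.

Lemma quad_spectral_eigenvector k :
  (adj (eigvec k) *m A *m eigvec k) 0 0 = e 0 k.
Proof.
rewrite -mulmxA spectral_eigenvector -scalemxAr mxE.
by rewrite spectral_eigenvector_unit mulr1.
Qed.

Lemma spectral_diag_le_max (lam : C) :
  (forall (mu : C) (v : 'cV[C]_n), v != 0 -> A *m v = mu *: v -> mu <= lam) ->
  forall k, e 0 k <= lam.
Proof.
move=> A_max k.
exact: A_max (spectral_eigenvector_neq0 k) (spectral_eigenvector k).
Qed.

End Spectral.

Lemma real_mul_le_pos_part (R : numFieldType) (e p : R) :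
  e \is Num.real -> 0 <= p -> p <= 1 -> e * p <= (e + `|e|) / 2.
Proof.
move=> e_real p_ge0 p_le1; have [e_ge0|e_lt0] := real_ge0P e_real.
  by rewrite (_ : (e + e) / 2 = e) ?ler_piMr //; field.
by rewrite subrr mul0r mulr_le0_ge0 // ltW.
Qed.

Lemma convex_comb_le_pos_part (R : numFieldType) n (e p : 'I_n -> R) :
  (forall k, e k \is Num.real) -> (forall k, 0 <= p k) -> \sum_k p k = 1 ->
  \sum_k e k * p k <= (\sum_k e k + \sum_k `|e k|) / 2.
Proof.
move=> e_real p_ge0 p_sum; rewrite -big_split mulr_suml /=.
apply: ler_sum => k _; apply: real_mul_le_pos_part => //.
by rewrite -p_sum (bigD1 k) //= lerDl sumr_ge0.
Qed.

Section HermitianQuadraticForm.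
Variables (C : numClosedFieldType) (n : nat) (A : 'M[C]_n) (x : 'cV[C]_n).
Hypotheses (A_herm : herm A) (x_unit : unit_vec x).

Let A_normal : A \is normalmx. Proof. exact: hermitian_normalmx. Qed.

Let e_real k : spectral_diag A 0 k \is Num.real.
Proof. exact: (mxOverP (hermitian_spectral_diag_real A_herm)). Qed.

Let p_ge0 k : 0 <= `|(spectralmx A *m x) k 0| ^+ 2.
Proof. exact: exprn_ge0. Qed.

Let p_sum := unit_vec_spectral_weights A x_unit.

Lemma herm_quad_le_trnorm : (adj x *m A *m x) 0 0 <= (\tr A + trnorm A) / 2.
Proof.
rewrite quad_spectral // mxtrace_spectral //.
exact: convex_comb_le_pos_part p_sum.
Qed.

Lemma herm_quad_ge_trnorm : (\tr A - trnorm A) / 2 <= (adj x *m A *m x) 0 0.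
Proof.
have Ne_real k : - spectral_diag A 0 k \is Num.real by rewrite realN.
have := convex_comb_le_pos_part Ne_real p_ge0 p_sum.
under eq_bigr do rewrite mulNr; under [in X in _ + X]eq_bigr do rewrite normrN.
rewrite !sumrN lerNl -mulNr opprD opprK.
by rewrite quad_spectral // mxtrace_spectral // addrC.
Qed.

Lemma herm_quad_le_spectral_ub (lam : C) :
  (forall k, spectral_diag A 0 k <= lam) -> (adj x *m A *m x) 0 0 <= lam.
Proof.
move=> e_le; rewrite quad_spectral // -[lam]mulr1 -p_sum mulr_sumr.
by apply: ler_sum => k _; rewrite ler_wpM2r.
Qed.

End HermitianQuadraticForm.

Lemma variance_ge0 (C : numClosedFieldType) n (H : 'M[C]_n) (phi : 'cV[C]_n) :
  herm H -> unit_vec phi -> 0 <= variance H phi.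
Proof.
move=> /hermE H_adj phi_unit.
pose v := H *m phi - braket phi (H *m phi) *: phi.
suff -> : variance H phi = (adj v *m v) 0 0.
  by rewrite adj_mulmx_col sumr_ge0 // => k _; rewrite exprn_ge0.
have entryB (X Y : 'M[C]_1) : (X - Y) 0 0 = X 0 0 - Y 0 0 by rewrite !mxE.
have entryZ a (X : 'M[C]_1) : (a *: X) 0 0 = a * X 0 0 by rewrite !mxE.
rewrite /v adjB adjZ adjM H_adj mulmxBl !mulmxBr -!scalemxAl -!scalemxAr.
rewrite !entryB !entryZ !mulmxA phi_unit /variance /braket !mulmxA.
set c := (adj phi *m H *m phi) 0 0.
ring.
Qed.

Section Density.
Variables (C : numClosedFieldType) (n : nat) (sigma : 'M[C]_n).
Hypothesis sigma_density : density sigma.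

Lemma density_herm : herm sigma.
Proof. by case: sigma_density => [[]]. Qed.

Lemma density_normal : sigma \is normalmx.
Proof. exact: hermitian_normalmx density_herm. Qed.

Lemma density_spectral_ge0 k : 0 <= spectral_diag sigma 0 k.
Proof.
case: sigma_density => [[_ sigma_psd] _].
by rewrite -quad_spectral_eigenvector ?density_normal.
Qed.

Lemma density_spectral_sum : \sum_k spectral_diag sigma 0 k = 1.
Proof.
by case: sigma_density => _ <-; rewrite mxtrace_spectral ?density_normal.
Qed.

Lemma density_spectral_pair_le j k : j != k ->
  spectral_diag sigma 0 j + spectral_diag sigma 0 k <= 1.
Proof.
move=> jk; rewrite -density_spectral_sum (bigD1 k) //= [leLHS]addrC lerD2l.
by rewrite (bigD1 j) //= lerDl sumr_ge0 // => i _; apply: density_spectral_ge0.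
Qed.

End Density.

Section Fidelity.
Variables (C : numClosedFieldType) (n : nat) (psi phi : 'cV[C]_n).
Variables (sigma : 'M[C]_n) (eps lam : C).
Hypotheses (psi_unit : unit_vec psi) (sigma_density : density sigma).
Hypothesis dist_le : trnorm (proj psi - sigma) <= eps.

Let A := proj psi - sigma.

Let A_herm : herm A.
Proof.
have /hermE sigma_adj := density_herm sigma_density.
by apply/hermE; rewrite adjB adjM adjK sigma_adj.
Qed.

Let A_trace : \tr A = 0.
Proof.
rewrite /A raddfB /= mxtrace_mulC.
by case: sigma_density => _ ->; rewrite /mxtrace big_ord1 psi_unit subrr.
Qed.

Let half_trnorm_le : trnorm A / 2 <= eps / 2.
Proof. by rewrite ler_pM2r ?invr_gt0 ?ltr0n. Qed.

Lemma quad_proj_sub (x : 'cV[C]_n) :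
  (adj x *m A *m x) 0 0 = `|braket psi x| ^+ 2 - (adj x *m sigma *m x) 0 0.
Proof.
rewrite /A /proj mulmxBr mulmxBl mxE [in X in _ + X]mxE; congr (_ - _).
rewrite !mulmxA -(mulmxA _ (adj psi)) mulmx11E normCK mulrC; congr (_ * _).
by rewrite -[adj x *m psi]adjK adjM adjK [LHS]mxE [in LHS]mxE.
Qed.

Hypothesis sigma_max :
  forall (mu : C) (v : 'cV[C]_n), v != 0 -> sigma *m v = mu *: v -> mu <= lam.

Lemma top_eigenvalue_ge : 1 - eps / 2 <= lam.
Proof.
have sigma_le : (adj psi *m sigma *m psi) 0 0 <= lam.
  have e_le := spectral_diag_le_max (density_normal sigma_density) sigma_max.
  exact: (herm_quad_le_spectral_ub (density_herm sigma_density) psi_unit e_le).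
have := herm_quad_le_trnorm A_herm psi_unit.
rewrite quad_proj_sub /braket psi_unit normr1 expr1n A_trace add0r => psi_le.
apply: le_trans sigma_le; rewrite lerBlDr addrC -lerBlDr.
exact: le_trans psi_le half_trnorm_le.
Qed.

Lemma overlap_ge : unit_vec phi -> sigma *m phi = lam *: phi ->
  lam - eps / 2 <= `|braket psi phi| ^+ 2.
Proof.
move=> phi_unit phi_eig; have := herm_quad_ge_trnorm A_herm phi_unit.
rewrite quad_proj_sub -mulmxA phi_eig -scalemxAr mxE phi_unit mulr1.
rewrite A_trace sub0r mulNr lerNl opprB => phi_ge.
by rewrite lerBlDl -lerBlDr (le_trans phi_ge half_trnorm_le).
Qed.

End Fidelity.

Definition purity_kernel (R : numFieldType) (a b : R) : R :=
  (a - b) ^+ 2 * (a + b) / (a * b).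

Section PurityKernel.
Variable R : numFieldType.
Implicit Types a b u x e : R.

Lemma purity_kernelC a b : purity_kernel a b = purity_kernel b a.
Proof. by rewrite /purity_kernel -sqrrN opprB [a + b]addrC [a * b]mulrC. Qed.

Lemma purity_kernel_ge0 a b : 0 <= a -> 0 <= b -> 0 <= purity_kernel a b.
Proof.
move=> a_ge0 b_ge0; have ab_sqr_ge0 : 0 <= (a - b) ^+ 2.
  by rewrite -realEsqr realB ?ger0_real.
by apply: divr_ge0; rewrite mulr_ge0 // addr_ge0.
Qed.

Lemma inv_sub3_le_purity_kernel u x :
  0 < x -> x <= u -> 3 * u <= 1 -> u^-1 - 3 <= purity_kernel (1 - u) x.
Proof.
move=> x_gt0 x_le_u u_le; rewrite -subr_ge0; set a := 1 - u.
have u_gt0 : 0 < u := lt_le_trans x_gt0 x_le_u.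
have ux_ge0 : 0 <= u - x by rewrite subr_ge0.
have u3_ge0 : 0 <= 1 - 3 * u by rewrite subr_ge0.
have au_ge0 : 0 <= a - u.
  have -> : a - u = 1 - 3 * u + u by rewrite /a; ring.
  exact: addr_ge0 u3_ge0 (ltW u_gt0).
have ax_ge0 : 0 <= a - x.
  have -> : a - x = a - u + (u - x) by ring.
  exact: addr_ge0.
have a_gt0 : 0 < a.
  have -> : a = a - u + u by ring.
  exact: ltr_wpDl.
have apu_ge0 : 0 <= a + u := addr_ge0 (ltW a_gt0) (ltW u_gt0).
(* The numerator of [purity_kernel a x - (u^-1 - 3)] over [a x u] is
   [(u - x) Q + u^3]; each summand of [Q] is a product of nonnegatives. *)
pose Q := u * (a - u) * (a + u) + u * x * (a - x) + u ^+ 2 * (a - x)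
  + a * (1 - 3 * u).
have Q_ge0 : 0 <= Q.
  apply: addr_ge0; [apply: addr_ge0; [apply: addr_ge0|]|];
    repeat apply: mulr_ge0; by [|apply: ltW].
have -> : purity_kernel a x - (u^-1 - 3) = ((u - x) * Q + u ^+ 3) / (a * x * u).
  by rewrite /purity_kernel /Q /a; field; rewrite -/a !gt_eqF.
apply: divr_ge0; last by rewrite !mulr_ge0 ?ltW.
exact: addr_ge0 (mulr_ge0 ux_ge0 Q_ge0) (exprn_ge0 _ (ltW u_gt0)).
Qed.

Lemma purity_kernel_ge e a x : 0 < e -> 3 * e < 2 -> 1 - e / 2 <= a ->
  0 < x -> x <= 1 - a -> 2 / e - 3 <= purity_kernel a x.
Proof.
move=> e_gt0 e_lt a_ge x_gt0 x_le; have -> : a = 1 - (1 - a) by ring.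
have u_gt0 : 0 < 1 - a := lt_le_trans x_gt0 x_le.
have u_le : 1 - a <= e / 2 by rewrite lerBlDl addrC -lerBlDl.
have u3_le : 3 * (1 - a) <= 1.
  apply: le_trans (ler_wpM2l (ler0n _ 3) u_le) _.
  by rewrite mulrA ler_pdivrMr ?ltr0n // mul1r ltW.
apply: le_trans (inv_sub3_le_purity_kernel x_gt0 x_le u3_le).
by rewrite lerD2r -invf_div ler_pV2 ?inE ?unitfE ?gt_eqF ?divr_gt0 ?ltr0n.
Qed.

End PurityKernel.

Lemma sum_sym_ge_double_row (R : numDomainType) n (t : 'I_n -> 'I_n -> R) k :
  (forall i j, 0 <= t i j) -> (forall i j, t i j = t j i) ->
  (\sum_(j | j != k) t k j) *+ 2 <= \sum_i \sum_j t i j.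
Proof.
move=> t_ge0 t_sym; rewrite mulr2n [leRHS](bigD1 k) //= lerD //.
  by rewrite [leRHS](bigD1 k) //= lerDr.
by apply: ler_sum => i _; rewrite t_sym [leRHS](bigD1 k) //= lerDl sumr_ge0.
Qed.

Definition purity_sum (R : numFieldType) n
    (d : 'I_n -> R) (w : 'I_n -> 'I_n -> R) : R :=
  \sum_i \sum_j w i j * (d j ^+ 2 / d i - d j).

Section PuritySum.
Variables (R : numFieldType) (n : nat) (d : 'I_n -> R) (w : 'I_n -> 'I_n -> R).
Hypotheses (d_ge0 : forall i, 0 <= d i) (w_ge0 : forall i j, 0 <= w i j).
Hypothesis w_sym : forall i j, w i j = w j i.
Hypothesis w_supp : forall i j, d i = 0 -> d j * w i j = 0.

Let t i j := w i j * purity_kernel (d i) (d j).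

Let t_ge0 i j : 0 <= t i j.
Proof. by rewrite mulr_ge0 ?purity_kernel_ge0. Qed.

Let t_sym i j : t i j = t j i.
Proof. by rewrite /t w_sym purity_kernelC. Qed.

(* If [d i = 0] or [d j = 0], both sides vanish: the left one by [w_supp],
   the right one because [0^-1 = 0]. *)
Lemma purity_term_sym i j :
  w i j * (d j ^+ 2 / d i - d j) + w j i * (d i ^+ 2 / d j - d i)
  = w i j * purity_kernel (d i) (d j).
Proof.
rewrite /purity_kernel; have [di0|di_neq0] := eqVneq (d i) 0.
  rewrite di0 !(mul0r, mulr0, invr0, expr0n, sub0r, subr0, addr0) /=.
  by rewrite mulrN mulrC w_supp ?oppr0.
have [dj0|dj_neq0] := eqVneq (d j) 0.
  rewrite dj0 !(mul0r, mulr0, invr0, expr0n, sub0r, subr0, add0r) /=.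
  by rewrite mulrN mulrC w_supp ?oppr0.
by rewrite w_sym; field; rewrite di_neq0 dj_neq0.
Qed.

Lemma purity_sum_double : purity_sum d w *+ 2 = \sum_i \sum_j t i j.
Proof.
rewrite /t; under eq_bigr do under eq_bigr do rewrite -purity_term_sym.
rewrite mulr2n; under eq_bigr do rewrite big_split.
by rewrite big_split /= [X in _ = _ + X]exchange_big.
Qed.

Lemma purity_sum_ge0 : 0 <= purity_sum d w.
Proof.
rewrite -(pmulrn_lge0 _ (isT : (0 < 2)%N)) purity_sum_double.
by apply: sumr_ge0 => i _; apply: sumr_ge0.
Qed.

Lemma purity_sum_ge_row k :
  \sum_(j | j != k) w k j * purity_kernel (d k) (d j) <= purity_sum d w.
Proof.
have := sum_sym_ge_double_row k t_ge0 t_sym.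
by rewrite -purity_sum_double lerMn2r.
Qed.

Lemma purity_sum_ge_row_bound k K : 0 < d k ->
  (forall j, j != k -> 0 < d j -> K <= purity_kernel (d k) (d j)) ->
  (\sum_(j | j != k) w k j) * K <= purity_sum d w.
Proof.
move=> dk_gt0 K_le; apply: le_trans (purity_sum_ge_row k); rewrite mulr_suml.
apply: ler_sum => j jk; have [dj0|dj_neq0] := eqVneq (d j) 0.
  have : d k * w k j = 0 by rewrite w_sym w_supp.
  by move/eqP; rewrite mulf_eq0 gt_eqF //= => /eqP->; rewrite !mul0r.
by rewrite ler_wpM2l // K_le // lt_def dj_neq0 d_ge0.
Qed.

End PuritySum.

Definition coh_weight (C : numClosedFieldType) n (sigma H : 'M[C]_n) i j : C :=
  `|conjmx (spectralmx sigma) H i j| ^+ 2.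

Section DensityEigenbasis.
Variables (C : numClosedFieldType) (n : nat) (sigma H : 'M[C]_n).
Hypotheses (sigma_density : density sigma) (H_herm : herm H).

Local Notation U := (spectralmx sigma).
Local Notation D := (diag_mx (spectral_diag sigma)).
Local Notation d := (spectral_diag sigma 0).
Local Notation h := (conjmx U H).
Local Notation w := (coh_weight sigma H).

Let U_unitary : U \is unitarymx. Proof. exact: spectral_unitarymx. Qed.

Let conjmx_sigma : conjmx U sigma = D.
Proof. exact/conjmx_spectral/density_normal. Qed.

Lemma coh_weight_sym i j : w i j = w j i.
Proof.
by rewrite /coh_weight (conjmx_unitary_herm U_unitary i j H_herm) norm_conjC.
Qed.

Lemma coh_weightE i j : w i j = h i j * h j i.
Proof.
by rewrite /coh_weight normCK (conjmx_unitary_herm U_unitary i j H_herm).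
Qed.

Lemma purity_cohE :
  \tr (H *m (sigma *m sigma) *m H *m supp_inv sigma) - \tr (sigma *m (H *m H))
  = purity_sum d w.
Proof.
have conjmx_inv : conjmx U (supp_inv sigma)
    = diag_mx (map_mx GRing.inv (spectral_diag sigma)).
  by rewrite /supp_inv -conjVmx ?spectral_unit // conjmxVK ?spectral_unit.
rewrite -(mxtrace_conjmx_unitary U_unitary (_ *m supp_inv sigma)).
rewrite -(mxtrace_conjmx_unitary U_unitary (sigma *m _)).
rewrite (conjmx_unitaryM U_unitary _ (supp_inv sigma)) conjmx_inv.
rewrite !(conjmx_unitaryM U_unitary) conjmx_sigma.
rewrite (mulmxA D) [\tr (_ *m h)]mxtrace_mulC /purity_sum.
under eq_bigr do under eq_bigr do rewrite coh_weightE.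
move: (conjmx U H) => M; rewrite -sumrB; apply: eq_bigr => i _.
rewrite !mulmxA !mul_mx_diag !mxE mulr_suml -sumrB; apply: eq_bigr => j _.
by rewrite !mxE; ring.
Qed.

Lemma supp_sub_coh_weight : supp_sub (H *m sigma *m H) sigma ->
  forall i j, d i = 0 -> d j * w i j = 0.
Proof.
move=> /submxP [X HsH] i j di0.
have {}HsH : H *m sigma *m H = sigma *m X^T.
  by rewrite -[LHS]trmxK HsH trmx_mul trmxK.
have hDh : h *m D *m h = D *m conjmx U X^T.
  by rewrite -conjmx_sigma -!conjmx_unitaryM // HsH.
have : \sum_k d k * w i k = 0.
  move/matrixP/(_ i i): hDh; rewrite mul_diag_mx [X in _ = X -> _]mxE di0 mul0r.
  move/(etrans _); apply; rewrite mul_mx_diag mxE.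
  by apply: eq_bigr => k _; rewrite mxE coh_weightE; ring.
move/psumr_eq0P; apply=> // k _.
by rewrite mulr_ge0 ?density_spectral_ge0 ?exprn_ge0.
Qed.

Lemma top_eigenvector_coord (phi : 'cV[C]_n) (lam : C) :
  unit_vec phi -> sigma *m phi = lam *: phi -> 2^-1 < lam ->
  exists2 k, d k = lam & forall M, braket phi (M *m phi) = conjmx U M k k.
Proof.
move=> phi_unit phi_eig lam_gt; set f := U *m phi.
have f_eig i : d i * f i 0 = lam * f i 0.
  have : D *m f = lam *: f.
    rewrite -conjmx_sigma conjymx // /f !mulmxA mulmxKtV //.
    by rewrite -mulmxA phi_eig scalemxAr.
  by move/matrixP/(_ i 0); rewrite mul_diag_mx !mxE.
have f_norm : \sum_i `|f i 0| ^+ 2 = 1 by apply: unit_vec_spectral_weights.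
have [k fk_neq0] : exists k, f k 0 != 0.
  case: (pickP (fun k => f k 0 != 0)) => [k|f0]; first by exists k.
  move: f_norm; rewrite big1 => [/esym/eqP|i _]; first by rewrite oner_eq0.
  by move/negbFE/eqP: (f0 i) => ->; rewrite normr0 expr0n.
have dk : d k = lam by apply: (mulIf fk_neq0); exact: f_eig.
have f_supp j : j != k -> f j 0 = 0.
  move=> jk; have [//|fj_neq0] := eqVneq (f j 0) 0; exfalso.
  have dj : d j = lam by apply: (mulIf fj_neq0); exact: f_eig.
  have two_lam : 1 < lam + lam.
    by rewrite -mulr2n -mulr_natl -ltr_pdivrMl ?ltr0n // mulr1.
  have := density_spectral_pair_le sigma_density jk; rewrite dj dk.
  by move/(lt_le_trans two_lam); rewrite ltxx.
have fk_norm : `|f k 0| ^+ 2 = 1.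
  rewrite -f_norm (bigD1 k) //= big1 ?addr0 // => j /f_supp ->.
  by rewrite normr0 expr0n.
exists k => // M; rewrite /braket mulmxA (quad_conjmx_unitary U_unitary).
exact: quad_single_coord.
Qed.

Lemma variance_top_eigenvector (phi : 'cV[C]_n) (lam : C) :
  unit_vec phi -> sigma *m phi = lam *: phi -> 2^-1 < lam ->
  exists k, d k = lam /\ variance H phi = \sum_(j | j != k) w k j.
Proof.
move=> phi_unit phi_eig lam_gt.
have [k dk bra] := top_eigenvector_coord phi_unit phi_eig lam_gt.
exists k; split => //; rewrite /variance !bra conjmx_unitaryM // mxE.
rewrite (bigD1 k) //= expr2 addrC addrK.
by apply: eq_bigr => j _; rewrite coh_weightE.
Qed.

End DensityEigenbasis.

Theorem mainTheorem18 (C : numClosedFieldType) (n : nat)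
  (psi : 'cV[C]_n) (sigma H : 'M[C]_n) (eps : C)
  (hpsi : unit_vec psi) (hsigma : density sigma) (hH : herm H)
  (heps : 0 < eps) (hdist : trnorm (proj psi - sigma) <= eps)
  (phi : 'cV[C]_n) (lam : C) (hphi : unit_vec phi)
  (heig : sigma *m phi = lam *: phi)
  (hmax : forall (mu : C) (v : 'cV[C]_n), v != 0 -> sigma *m v = mu *: v -> mu <= lam) :
  1 - eps <= `|braket psi phi| ^+ 2 /\
  ext_ge (purity_coh H sigma) (variance H phi * (2 / eps - 3)).
Proof.
have lam_ge := top_eigenvalue_ge hpsi hsigma hdist hmax.
split.
  apply: le_trans (overlap_ge hpsi hsigma hdist hphi heig).
  by rewrite (_ : 1 - eps = 1 - eps / 2 - eps / 2) ?lerB //; field.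
rewrite /purity_coh; case: ifP => // supp /=; rewrite purity_cohE //.
have d_ge0 := density_spectral_ge0 hsigma.
have w_ge0 i j : 0 <= coh_weight sigma H i j by apply: exprn_ge0.
have w_sym := coh_weight_sym sigma hH.
have w_supp := supp_sub_coh_weight hsigma hH supp.
have [eps_big|eps_small] := real_leP (ger0_real (ler0n C 2))
  (ger0_real (mulr_ge0 (ler0n C 3) (ltW heps))).
  apply: le_trans (purity_sum_ge0 d_ge0 w_ge0 w_sym w_supp).
  by rewrite mulr_ge0_le0 ?variance_ge0 // subr_le0 ler_pdivrMr // mulrC.
have lam_gt : 2^-1 < lam.
  apply: lt_le_trans lam_ge; rewrite -subr_gt0.
  rewrite (_ : 1 - eps / 2 - 2^-1 = (2 - 3 * eps) / 6 + 6^-1); last by field.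
  by rewrite ltr_wpDl ?invr_gt0 ?ltr0n // divr_ge0 ?ler0n // subr_ge0 ltW.
have [k [dk ->]] := variance_top_eigenvector hsigma hH hphi heig lam_gt.
apply: purity_sum_ge_row_bound => // [|j jk dj_gt0].
  by rewrite dk (lt_trans _ lam_gt) ?invr_gt0 ?ltr0n.
apply: purity_kernel_ge; rewrite ?dk //.
by rewrite lerBrDr -dk (density_spectral_pair_le hsigma jk).
Qed.
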